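(* Let $V$ be a consistent sequence ($FI_{\mathscr{H}}$-module) and $a\ge0$. If $S_{+a}V$ is generated in degree $\le d$ for some finite $d$, then $V$ is generated in finite degree (i.e. in degree $\le d'$ for some finite $d'$).
   Context: $\mathscr{H}_n$ is the Iwahori–Hecke algebra of $\mathfrak{S}_n$ over a field $k$ of characteristic $0$ with parameter $q$ not a root of unity; $\tau:\mathscr{H}_n\to\mathscr{H}_{n+1}$, $T_{s_i}\mapsto T_{s_i}$. A consistent sequence is $V=(V_n,\phi_n)$ with $V_n$ an $\mathscr{H}_n$-module and $\phi_n:V_n\to V_{n+1}$ $k$-linear with $\phi_n(hv)=\tau(h)\phi_n(v)$. $S_{+a}V$ has $(S_{+a}V)_n=V_{n+a}$, viewed as an $\mathscr{H}_n$-module by restriction along $\mathscr{H}_n\subseteq\mathscr{H}_{n+a}$, with maps $\phi_{n+a}$. With $\phi_{n-1,i}=\phi_{n-1}\circ\cdots\circ\phi_i$ and, for $S=\bigsqcup S_n$, $\mathrm{span}(S)_n$ the $\mathscr{H}_n$-submodule generated by $\bigcup_{i<n}\phi_{n-1,i}(S_i)\cup S_n$, $V$ is generated in degree $\le d$ if $\mathrm{span}(\bigsqcup_{j\le d}V_j)=V$; ''finite degree'' means generated in degree $\le d$ for some $d$. *)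

From mathcomp Require Import all_boot all_order all_algebra.
Set Implicit Arguments. Unset Strict Implicit. Unset Printing Implicit Defensive.
Import GRing.Theory.
Local Open Scope ring_scope.

(* Raw data of a sequence of Hecke-modules with transition maps.
   cs_V n      : the k-vector space V_n
   cs_T n i    : the action of the generator T_{s_{i+1}} on V_n (meaningful for i.+1 < n,
                 i.e. s_1,...,s_{n-1} are indexed by 0,...,n-2)
   cs_phi n    : the map phi_n : V_n -> V_{n+1}. *)
Record cseq (k : fieldType) := CSeq {
  cs_V : nat -> lmodType k;
  cs_T : forall n : nat, nat -> cs_V n -> cs_V n;
  cs_phi : forall n : nat, cs_V n -> cs_V n.+1 }.
Arguments cs_V {k} c n.
Arguments cs_T {k} c n _ _.
Arguments cs_phi {k} c n _.

Definition klinear (k : fieldType) (U W : lmodType k) (f : U -> W) : Prop :=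
  forall (c : k) (u v : U), f (c *: u + v) = c *: f u + f v.

(* V is a consistent sequence of H_n-modules (H_n = Iwahori-Hecke algebra of S_n with
   parameter q, presented by generators T_1..T_{n-1}, quadratic relations
   (T_i - q)(T_i + 1) = 0 and braid relations); an H_n-module structure on a k-space is
   exactly a family of k-linear operators satisfying these relations.  phi_n is k-linear
   and tau-equivariant (it suffices to check on generators). *)
Definition consistent (k : fieldType) (q : k) (C : cseq k) : Prop :=
  (forall n i, (i.+1 < n)%N -> klinear (cs_T C n i)) /\
      (forall n, klinear (cs_phi C n)) /\
      (forall n i v, (i.+1 < n)%N ->
          cs_T C n i (cs_T C n i v) = (q - 1) *: cs_T C n i v + q *: v) /\
      (forall n i v, (i.+2 < n)%N ->
          cs_T C n i (cs_T C n i.+1 (cs_T C n i v))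
          = cs_T C n i.+1 (cs_T C n i (cs_T C n i.+1 v))) /\
      (forall n i j v, (i.+1 < n)%N -> (j.+1 < n)%N -> (i.+1 < j)%N ->
          cs_T C n i (cs_T C n j v) = cs_T C n j (cs_T C n i v)) /\
      (forall n i v, (i.+1 < n)%N ->
          cs_phi C n (cs_T C n i v) = cs_T C n.+1 i (cs_phi C n v)).

Inductive reach (k : fieldType) (C : cseq k) (m : nat) (w : cs_V C m)
  : forall n : nat, cs_V C n -> Prop :=
  | reach_refl : @reach k C m w m w
  | reach_step n v : @reach k C m w n v -> @reach k C m w n.+1 (cs_phi C n v).

Definition in_span (k : fieldType) (C : cseq k) (n : nat) (G : cs_V C n -> Prop)
  (v : cs_V C n) : Prop :=
  forall P : cs_V C n -> Prop,
    P 0 ->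
    (forall x y, P x -> P y -> P (x + y)) ->
    (forall (c : k) x, P x -> P (c *: x)) ->
    (forall i x, (i.+1 < n)%N -> P x -> P (cs_T C n i x)) ->
    (forall x, G x -> P x) ->
    P v.

Definition gen_le (k : fieldType) (C : cseq k) (d : nat) : Prop :=
  forall (n : nat) (v : cs_V C n),
    @in_span k C n (fun u => exists (m : nat) (w : cs_V C m), (m <= d)%N /\ @reach k C m w n u) v.

(* The shift S_{+a} V : (S_{+a}V)_n = V_{n+a}, restricted to H_n (only the generators
   T_i with i.+1 < n are used, since in_span / consistent index by n), maps phi_{n+a}. *)
Definition shift (k : fieldType) (C : cseq k) (a : nat) : cseq k :=
  @CSeq k (fun n => cs_V C (n + a)) (fun n => cs_T C (n + a))
          (fun n => cs_phi C (n + a)).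

From mathcomp Require Import all_boot all_order all_algebra.
Local Open Scope ring_scope.

(* Take d' = d + a.  For n < a every vector of V_n is itself a generator of
   degree n <= d + a.  For n = p + a, the H_p-span in (S_{+a}V)_p of images of
   V_{m+a} (m <= d) is contained in the H_{p+a}-span in V_{p+a} of images of
   vectors of degree <= d + a, because H_p acts through the generators of
   H_{p+a} and the transition maps of S_{+a}V are those of V. *)

Section Span.

Variables (k : fieldType) (C : cseq k).

Lemma in_span_mem (n : nat) (G : cs_V C n -> Prop) (v : cs_V C n) :
  G v -> in_span G v.
Proof. by move=> Gv P _ _ _ _ PG; apply: PG. Qed.

Lemma in_span_sub (n : nat) (G G' : cs_V C n -> Prop) (v : cs_V C n) :
  (forall x, G x -> G' x) -> in_span G v -> in_span G' v.
Proof.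
move=> sGG' Gv P P0 PD PZ PT PG'.
by apply: (Gv P) => // x /sGG'; apply: PG'.
Qed.

Lemma in_span_shift (a p : nat) (G : cs_V C (p + a) -> Prop) (v : cs_V C (p + a)) :
  @in_span k (shift C a) p G v -> @in_span k C (p + a) G v.
Proof.
move=> Gv P P0 PD PZ PT; apply: (Gv P) => // i x ip.
by apply: PT; apply: leq_trans ip (leq_addr _ _).
Qed.

Lemma reach_shift (a m : nat) (w : cs_V (shift C a) m)
  (p : nat) (u : cs_V (shift C a) p) :
  @reach k (shift C a) m w p u -> @reach k C (m + a) w (p + a) u.
Proof.
elim=> [|n v _ IH]; first exact: reach_refl.
exact: (@reach_step k C (m + a) w (n + a) v IH).
Qed.

End Span.

Lemma gen_le_shift (k : fieldType) (C : cseq k) (a d : nat) :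
  gen_le (shift C a) d -> gen_le C (d + a).
Proof.
move=> gen n v; case: (leqP a n) => [le_an | ltna].
  have [p def_n] : exists p, n = (p + a)%N by exists (n - a)%N; rewrite subnK.
  subst n; apply: in_span_shift; apply: in_span_sub (gen p v).
  move=> x [m [w [le_md reach_x]]].
  exists (m + a)%N, w; split; first by rewrite leq_add2r.
  exact: reach_shift.
apply: in_span_mem; exists n, v; split; last exact: reach_refl.
by rewrite ltnW // ltn_addl.
Qed.

Theorem lemma5p3 (k : fieldType) (q : k) (C : cseq k) (a d : nat) :
  [pchar k] =i pred0 ->
  (forall m : nat, (0 < m)%N -> q ^+ m != 1) ->
  consistent q C ->
  gen_le (shift C a) d ->
  exists d' : nat, gen_le C d'.
Proof. by move=> _ _ _ /gen_le_shift gen; exists (d + a)%N. Qed.
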